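(* Let $\theta$ be a random variable with a continuous distribution, let $u(q,\theta)$ be strictly concave and monotone increasing in $q$ for every $\theta$, with marginal utility $\mu(q,\theta)=\partial u(q,\theta)/\partial q$ (so $\mu>0$ and $\partial\mu/\partial q<0$). Let $\pi_0>0$, $\pi_2>0$, and let $\phi:\mathbb{R}\to\mathbb{R}$ be a penalty function with $\phi(0)=\phi'(0)=0$, $\phi(x)=\phi(-x)$ for all $x$, and $\phi''(x)>0$ for all $x$. For a baseline report $f\in\mathbb{R}$ define $q^a(\theta)=\arg\min_q\{\pi_0 q-u(q,\theta)\}$, $q^b(f,\theta)=\arg\min_q\{\pi_0 q-u(q,\theta)+\phi(f-q)\}$, $q^c(\theta)=\arg\min_q\{\pi_0 q-u(q,\theta)-\pi_2(f-q)\}$. Then for every $\theta$: (i) $q^c(\theta)<q^a(\theta)$, and (ii) either $q^a(\theta)<q^b(f,\theta)<f$ or $f<q^b(f,\theta)<q^a(\theta)$.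
   Context: $q^a$ is the consumption of a consumer not participating in the demand response program, $q^b$ the consumption of a participating consumer who is not called (and is penalized by $\phi$ for deviating from its reported baseline $f$), and $q^c$ the consumption of a participating consumer who is called and rewarded $\pi_2$ per unit reduction below $f$. The minimizers are characterized by the first-order conditions $\pi_0=\mu(q^a,\theta)$, $\pi_0-\mu(q^b,\theta)-\phi'(f-q^b)=0$, and $\pi_0+\pi_2=\mu(q^c,\theta)$. *)

From Stdlib Require Export Reals.
Open Scope R_scope.

Definition strictly_concave (g : R -> R) : Prop :=
  forall x y t, x <> y -> 0 < t < 1 ->
    t * g x + (1 - t) * g y < g (t * x + (1 - t) * y).

Definition strictly_increasing (g : R -> R) : Prop :=
  forall x y, x < y -> g x < g y.

Definition is_argmin (g : R -> R) (q : R) : Prop :=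
  forall q', g q <= g q'.

(* Each consumption is pinned down by its first-order condition:
   mu(q^a) = pi0, mu(q^c) = pi0 + pi2 and mu(q^b) + phi'(f - q^b) = pi0.
   Since dmu/dq < 0, mu is strictly decreasing, so the higher effective price
   pushes q^c below q^a.  Since phi'' > 0 and phi'(0) = 0, phi'(f - q^b) has
   the sign of f - q^b; hence mu(q^b) - mu(q^a) has the sign of q^b - f, which
   forces q^b strictly between q^a and f. *)

From Stdlib Require Import Reals Lra.
Open Scope R_scope.

Lemma derivable_pt_lim_argmin_eq0 (g : R -> R) (q l : R) :
  derivable_pt_lim g q l -> is_argmin g q -> l = 0.
Proof.
  intros Hg Hmin.
  pose (pr := exist (fun l => derivable_pt_lim g q l) l Hg : derivable_pt g q).
  exact (deriv_minimum g (q - 1) (q + 1) q pr ltac:(lra) ltac:(lra)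
           (fun x _ _ => Hmin x)).
Qed.

Lemma strictly_increasing_of_derive_pos (g g' : R -> R) :
  (forall x, derivable_pt_lim g x (g' x)) -> (forall x, 0 < g' x) ->
  strictly_increasing g.
Proof.
  intros Hg Hpos a b Hab.
  pose (pr := fun x => exist (fun l => derivable_pt_lim g x l) (g' x) (Hg x)
                : derivable_pt g x).
  destruct (MVT_cor1 g a b pr Hab) as [c [Hc _]]; simpl in Hc.
  assert (0 < g' c * (b - a)) by (apply Rmult_lt_0_compat; [apply Hpos | lra]).
  lra.
Qed.

Section StrictlyIncreasing.

Variable g : R -> R.
Hypothesis Hg : strictly_increasing g.

Lemma strictly_increasing_le x y : x <= y -> g x <= g y.
Proof.
  intros [Hlt | ->]; [apply Rlt_le, Hg, Hlt | apply Rle_refl].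
Qed.

Lemma strictly_increasing_lt_inv x y : g x < g y -> x < y.
Proof.
  intros H; destruct (Rlt_or_le x y) as [Hlt | Hle]; [exact Hlt |].
  apply strictly_increasing_le in Hle; lra.
Qed.

Lemma strictly_increasing_le_inv x y : g x <= g y -> x <= y.
Proof.
  intros H; destruct (Rle_or_lt x y) as [Hle | Hlt]; [exact Hle |].
  apply Hg in Hlt; lra.
Qed.

End StrictlyIncreasing.

Lemma derivable_pt_lim_linear (a x : R) : derivable_pt_lim (fun q => a * q) x a.
Proof.
  pose proof (derivable_pt_lim_scal id a x 1 (derivable_pt_lim_id x)) as H.
  rewrite Rmult_1_r in H; exact H.
Qed.

Lemma derivable_pt_lim_shortfall (f x : R) :
  derivable_pt_lim (fun q => f - q) x (0 - 1).
Proof.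
  exact (derivable_pt_lim_minus (fct_cte f) id x 0 1
           (derivable_pt_lim_const f x) (derivable_pt_lim_id x)).
Qed.

Section FirstOrderConditions.

Variables (U M : R -> R) (c : R).
Hypothesis HU : forall q, derivable_pt_lim U q (M q).

Lemma derivable_pt_lim_net_cost q :
  derivable_pt_lim (fun q => c * q - U q) q (c - M q).
Proof.
  exact (derivable_pt_lim_minus (fun q => c * q) U q c (M q)
           (derivable_pt_lim_linear c q) (HU q)).
Qed.

Lemma argmin_net_cost q : is_argmin (fun q => c * q - U q) q -> M q = c.
Proof.
  intros Hmin.
  assert (H := derivable_pt_lim_argmin_eq0 _ q _ (derivable_pt_lim_net_cost q) Hmin).
  lra.
Qed.

Lemma argmin_net_cost_reward (r f q : R) :
  is_argmin (fun q => c * q - U q - r * (f - q)) q -> M q = c + r.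
Proof.
  intros Hmin.
  assert (Hd : derivable_pt_lim (fun q => c * q - U q - r * (f - q)) q
                 (c - M q - r * (0 - 1))).
  { apply (derivable_pt_lim_minus (fun q => c * q - U q) (fun q => r * (f - q))).
    - apply derivable_pt_lim_net_cost.
    - apply (derivable_pt_lim_scal (fun q => f - q)), derivable_pt_lim_shortfall. }
  assert (H := derivable_pt_lim_argmin_eq0 _ q _ Hd Hmin).
  lra.
Qed.

Lemma argmin_net_cost_penalty (P P' : R -> R) (f q : R) :
  (forall x, derivable_pt_lim P x (P' x)) ->
  is_argmin (fun q => c * q - U q + P (f - q)) q -> M q + P' (f - q) = c.
Proof.
  intros HP Hmin.
  assert (Hd : derivable_pt_lim (fun q => c * q - U q + P (f - q)) q
                 (c - M q + P' (f - q) * (0 - 1))).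
  { apply (derivable_pt_lim_plus (fun q => c * q - U q) (fun q => P (f - q))).
    - apply derivable_pt_lim_net_cost.
    - apply (derivable_pt_lim_comp (fun q => f - q) P).
      + apply derivable_pt_lim_shortfall.
      + apply HP. }
  assert (H := derivable_pt_lim_argmin_eq0 _ q _ Hd Hmin).
  lra.
Qed.

End FirstOrderConditions.

Section PenaltyBalance.

Variables (M P : R -> R) (qa qb f : R).
Hypothesis HM : strictly_increasing (fun x => - M x).
Hypothesis HP : strictly_increasing P.
Hypothesis HP0 : P 0 = 0.
Hypothesis Hbalance : M qb + P (f - qb) = M qa.

Lemma penalty_balance_above : qa < f -> qa < qb /\ qb < f.
Proof.
  intros Hf.
  assert (Hqb : qb < f).
  { destruct (Rlt_or_le qb f) as [Hlt | Hle]; [exact Hlt |].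
    assert (P (f - qb) <= 0)
      by (rewrite <- HP0; apply (strictly_increasing_le P HP); lra).
    assert (qb <= qa)
      by (apply (strictly_increasing_le_inv _ HM); lra).
    lra. }
  split; [| exact Hqb].
  assert (0 < P (f - qb)) by (rewrite <- HP0; apply HP; lra).
  apply (strictly_increasing_lt_inv _ HM); lra.
Qed.

Lemma penalty_balance_below : f < qa -> f < qb /\ qb < qa.
Proof.
  intros Hf.
  assert (Hqb : f < qb).
  { destruct (Rlt_or_le f qb) as [Hlt | Hle]; [exact Hlt |].
    assert (0 <= P (f - qb))
      by (rewrite <- HP0; apply (strictly_increasing_le P HP); lra).
    assert (qa <= qb)
      by (apply (strictly_increasing_le_inv _ HM); lra).
    lra. }
  split; [exact Hqb |].
  assert (P (f - qb) < 0) by (rewrite <- HP0; apply HP; lra).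
  apply (strictly_increasing_lt_inv _ HM); lra.
Qed.

End PenaltyBalance.

Theorem lemma1
  (u mu dmu : R -> R -> R) (pi0 pi2 : R) (phi phi1 phi2 : R -> R)
  (f theta qa qb qc : R)
  (* utility: strictly concave, increasing, marginal utility mu > 0, dmu/dq < 0 *)
  (Hconc : forall th, strictly_concave (fun q => u q th))
  (Hincr : forall th, strictly_increasing (fun q => u q th))
  (Hmu : forall th q, derivable_pt_lim (fun q => u q th) q (mu q th))
  (Hmu_pos : forall th q, 0 < mu q th)
  (Hdmu : forall th q, derivable_pt_lim (fun q => mu q th) q (dmu q th))
  (Hdmu_neg : forall th q, dmu q th < 0)
  (* prices *)
  (Hpi0 : 0 < pi0) (Hpi2 : 0 < pi2)
  (* penalty function *)
  (Hphi1 : forall x, derivable_pt_lim phi x (phi1 x))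
  (Hphi2 : forall x, derivable_pt_lim phi1 x (phi2 x))
  (Hphi0 : phi 0 = 0) (Hphi10 : phi1 0 = 0)
  (Hphi_even : forall x, phi x = phi (- x))
  (Hphi2_pos : forall x, 0 < phi2 x)
  (* consumptions as minimizers *)
  (Hqa : is_argmin (fun q => pi0 * q - u q theta) qa)
  (Hqb : is_argmin (fun q => pi0 * q - u q theta + phi (f - q)) qb)
  (Hqc : is_argmin (fun q => pi0 * q - u q theta - pi2 * (f - q)) qc)
  (* the baseline report differs from the non-participating consumption *)
  (Hf : f <> qa) :
  qc < qa /\ ((qa < qb /\ qb < f) \/ (f < qb /\ qb < qa)).
Proof.
  assert (Hmu_decr : strictly_increasing (fun q => - mu q theta)).
  { apply (strictly_increasing_of_derive_pos _ (fun q => - dmu q theta)).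
    - intros q; apply (derivable_pt_lim_opp (fun q => mu q theta)), Hdmu.
    - intros q; specialize (Hdmu_neg theta q); lra. }
  assert (Hphi1_incr : strictly_increasing phi1)
    by exact (strictly_increasing_of_derive_pos phi1 phi2 Hphi2 Hphi2_pos).
  assert (Ea := argmin_net_cost _ _ pi0 (Hmu theta) qa Hqa).
  assert (Eb := argmin_net_cost_penalty _ _ pi0 (Hmu theta) phi phi1 f qb Hphi1 Hqb).
  assert (Ec := argmin_net_cost_reward _ _ pi0 (Hmu theta) pi2 f qc Hqc).
  assert (Hbalance : mu qb theta + phi1 (f - qb) = mu qa theta) by lra.
  split.
  - apply (strictly_increasing_lt_inv _ Hmu_decr); lra.
  - destruct (Rdichotomy f qa Hf) as [Hbelow | Habove].
    + right; exact (penalty_balance_below _ _ qa qb f Hmu_decr Hphi1_incr Hphi10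
                      Hbalance Hbelow).
    + left; exact (penalty_balance_above _ _ qa qb f Hmu_decr Hphi1_incr Hphi10
                     Hbalance Habove).
Qed.
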